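(* Let ${\mathcal R}$ be a similarity relation, $\mu$ a cut value, and $P;\sigma;\mathfrak{d}$ a configuration. If one step of $\mathsf{HOPSU}$ transforms $P;\sigma;\mathfrak{d}$ into $P';\sigma\vartheta;\mathfrak{d}\wedge\mathfrak{d}'$, and $\tau$ is an $({\mathcal R},\mu)$-unifier of $P'$ with degree $\mathfrak{d}''$, then $\vartheta\tau$ is an $({\mathcal R},\mu)$-unifier of $P$ with degree $\mathfrak{d}'\wedge\mathfrak{d}''$.
   Context: Terms: simply typed $\lambda$-terms over disjoint countably infinite sets $\mathcal{V}$ (typed variables) and $\mathcal{F}$ (typed constants), types $\tau::=\delta\mid\tau\to\tau$. Terms are identified modulo $\alpha$, kept $\beta$-normal, and $\eta$-expanded except that arguments of free variables are kept $\eta$-normal (i.e. are bound variables); a term is written $\lambda x_1,\dots,x_n.h(t_1,\dots,t_m)$ with head $h$. Free variables are written $F,G,H,X,Y,\dots$, bound variables $x,y,z,\dots$. A higher-order pattern is a term where every free variable occurrence is applied to a list of pairwise distinct bound variables; all terms in problems and substitutions are higher-order patterns. Substitutions $\sigma$ are type-preserving maps with finite domain $\mathit{Dom}(\sigma)=\{X\mid X\sigma\neq X\}$, applied postfix ($t\sigma$, capture-avoiding, followed by $\beta$-normalization); $\sigma\vartheta$ means first $\sigma$ then $\vartheta$; $\varepsilon$ is the identity; $\varphi|_V$ is the restriction to $V$; $\mathtt{fv}(t)$ is the set of free variables. Fuzzy setting: T-norm $\wedge=\min$. ${\mathcal R}_A$ is a similarity relation (reflexive, symmetric, min-transitive map to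 $[0,1]$) on $\mathcal{F}\cup\mathcal{V}$ with ${\mathcal R}_A(x,y)=0$ for distinct variables, ${\mathcal R}_A(f,g)=0$ for constants of different types, ${\mathcal R}_A(x,f)=0$ for a variable and a constant. It induces ${\mathcal R}$ on terms: on normal forms ${\mathcal R}(a,b)={\mathcal R}_A(a,b)$ for symbols, ${\mathcal R}((t_1\,s_1),(t_2\,s_2))={\mathcal R}(t_1,t_2)\wedge{\mathcal R}(s_1,s_2)$, ${\mathcal R}(\lambda x.t,\lambda y.s)={\mathcal R}(t\{x\mapsto z\},s\{y\mapsto z\})$ for fresh $z$ of the same type, $0$ otherwise. A cut value is $\mu\in(0,1]$. An equation is written $t\simeq^?_{{\mathcal R},\mu}s$; a unification problem is a finite set of equations. A substitution $\sigma$ is an $({\mathcal R},\mu)$-unifier of $\{t_1\simeq^?_{{\mathcal R},\mu}s_1,\dots,t_n\simeq^?_{{\mathcal R},\mu}s_n\}$ with degree $\mathfrak{d}$ if ${\mathcal R}(t_1\sigma,s_1\sigma)\wedge\dots\wedge{\mathcal R}(t_n\sigma,s_n\sigma)=\mathfrak{d}\ge\mu$. Algorithm $\mathsf{HOPSU}$: it works on configurations $P;\sigma;\mathfrak{d}$ ($P$ a problem, $\sigma$ a substitution, $\mathfrak{d}\ge\mu$ a degree) or $\bot$; a step applies one of the following rules to a selected equation ($\uplus$ is disjoint union): (Abs) $\{\lambda x.t\simeq^?\lambda x.s\}\uplus P;\sigma;\mathfrak{d}\leadsto\{t\simeq^?s\}\cup P;\sigma;\mathfrak{d}$. (Dec)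 $\{f(t_1,\dots,t_n)\simeq^?g(s_1,\dots,s_n)\}\uplus P;\sigma;\mathfrak{d}\leadsto\{t_1\simeq^?s_1,\dots,t_n\simeq^?s_n\}\cup P;\sigma;\mathfrak{d}\wedge{\mathcal R}(f,g)$, where $f,g$ are rigid heads, $n\ge0$, and $\mathfrak{d}\wedge{\mathcal R}(f,g)\ge\mu$. (SV) $\{F(x_1,\dots,x_n)\simeq^?F(y_1,\dots,y_n)\}\uplus P;\sigma;\mathfrak{d}\leadsto P\vartheta;\sigma\vartheta;\mathfrak{d}$, where $\{z_1,\dots,z_m\}=\{x_i\mid x_i=y_i\}$ and $\vartheta=\{F\mapsto\lambda x_1,\dots,x_n.H(z_1,\dots,z_m)\}$ with $H$ fresh. (Ori) $\{a(s_1,\dots,s_m)\simeq^?F(x_1,\dots,x_n)\}\uplus P;\sigma;\mathfrak{d}\leadsto\{F(x_1,\dots,x_n)\simeq^?a(s_1,\dots,s_m)\}\cup P;\sigma;\mathfrak{d}$, where $F$ is free and $a$ is a constant or $a\in\{x_1,\dots,x_n\}$. (LF) $\{F(x_1,\dots,x_n)\simeq^?a(s_1,\dots,s_m)\}\uplus P;\sigma;\mathfrak{d}\leadsto P\vartheta;\sigma\vartheta;\mathfrak{d}$, where $F\notin\mathtt{fv}(a(s_1,\dots,s_m))$, $a$ is a constant, a free variable, or in $\{x_1,\dots,x_n\}$, $\mathsf{VarElim}(F(x_1,\dots,x_n),a(s_1,\dots,s_m))=\varphi$, and $\vartheta=\varphi|_V$ with $V=\{F\}\cup\mathtt{fv}(a(s_1,\dots,s_m))$.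 (Fail) $\{t\simeq^?s\}\uplus P;\sigma;\mathfrak{d}\leadsto\bot$ if no other rule applies to the selected equation. $\mathsf{VarElim}(t,s)$ starts from $\{t\simeq^?s\};\varepsilon$ and applies as long as possible: (VE1) $\{F(x_1,\dots,x_n)\simeq^?a(s_1,\dots,s_m)\}\uplus P;\sigma\leadsto\{H_1(x_1,\dots,x_n)\simeq^?s_1,\dots,H_m(x_1,\dots,x_n)\simeq^?s_m\}\cup P;\sigma\vartheta$, where $a$ is a constant or in $\{x_1,\dots,x_n\}$, $\vartheta=\{F\mapsto\lambda x_1,\dots,x_n.a(H_1(x_1,\dots,x_n),\dots,H_m(x_1,\dots,x_n))\}$ with $H_i$ fresh of appropriate types; (VE2) $\{F(x_1,\dots,x_n)\simeq^?G(y_1,\dots,y_m)\}\uplus P;\sigma\leadsto P\vartheta;\sigma\vartheta$, where $\{x_1,\dots,x_n\}\cap\{y_1,\dots,y_m\}=\{z_1,\dots,z_k\}$ and $\vartheta=\{F\mapsto\lambda x_1,\dots,x_n.H(z_1,\dots,z_k),G\mapsto\lambda y_1,\dots,y_m.H(z_1,\dots,z_k)\}$ with $H$ fresh. If it ends in $\emptyset;\varphi$, then $\mathsf{VarElim}(t,s)=\varphi$. *)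

(* Terms are represented with de Bruijn indices for bound variables (terms are
   taken modulo alpha), in spine form so that they are beta-normal by
   construction; free variables may only be applied to (de Bruijn) bound
   variables (higher-order pattern shape). *)
From Stdlib Require Import Reals List Arith Relations.
Import ListNotations.

Inductive ty : Type :=
| TBase : nat -> ty
| TArr  : ty -> ty -> ty.

Definition ty_eq_dec (A B : ty) : {A = B} + {A <> B}.
Proof. decide equality; apply Nat.eq_dec. Defined.

Fixpoint arrows (As : list ty) (B : ty) : ty :=
  match As with
  | [] => B
  | A :: As' => TArr A (arrows As' B)
  end.

Definition is_base (T : ty) : Prop := exists n, T = TBase n.

Record fvar : Type := FV { fv_name : nat; fv_ty : ty }.
Record cst  : Type := CS { c_name : nat; c_ty : ty }.

Definition fvar_eq_dec (X Y : fvar) : {X = Y} + {X <> Y}.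
Proof. decide equality; first [apply ty_eq_dec | apply Nat.eq_dec]. Defined.

Definition cst_eq_dec (X Y : cst) : {X = Y} + {X <> Y}.
Proof. decide equality; first [apply ty_eq_dec | apply Nat.eq_dec]. Defined.

Inductive rhead : Type :=
| BV  : nat -> rhead
| Cst : cst -> rhead.

Inductive tm : Type :=
| Lam  : ty -> tm -> tm
| Rig  : rhead -> list tm -> tm
| Flex : fvar -> list nat -> tm.

Fixpoint lams (As : list ty) (t : tm) : tm :=
  match As with
  | [] => t
  | A :: As' => Lam A (lams As' t)
  end.

Fixpoint fv (t : tm) : list fvar :=
  match t with
  | Lam _ b => fv b
  | Rig _ ts => (fix fvs (l : list tm) : list fvar :=
                   match l with [] => [] | u :: l' => fv u ++ fvs l' end) ts
  | Flex F _ => [F]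
  end.

Definition up (r : nat -> nat) (i : nat) : nat :=
  match i with 0 => 0 | S k => S (r k) end.

Fixpoint ren (r : nat -> nat) (t : tm) : tm :=
  match t with
  | Lam A b => Lam A (ren (up r) b)
  | Rig h ts =>
      Rig (match h with BV i => BV (r i) | Cst c => Cst c end)
          ((fix rens (l : list tm) : list tm :=
              match l with [] => [] | u :: l' => ren r u :: rens l' end) ts)
  | Flex F xs => Flex F (map r xs)
  end.

Fixpoint strip (k : nat) (t : tm) : tm :=
  match k with
  | 0 => t
  | S k' => match t with Lam _ b => strip k' b | _ => t end
  end.

(* beta-normal form of (lambda x1..xn. b) applied to bound variables ys:
   since the arguments are bound variables this is a renaming *)
Definition inst (u : tm) (ys : list nat) : tm :=
  let n := length ys in
  ren (fun i => if i <? n then nth (n - 1 - i) ys 0 else i - n) (strip n u).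

(* Substitutions: finite association lists (first binding wins);
   variables not bound are mapped to themselves. *)

Definition subst := list (fvar * tm).

Definition eps : subst := [].

Fixpoint lookup (s : subst) (X : fvar) : option tm :=
  match s with
  | [] => None
  | (Y, u) :: s' => if fvar_eq_dec X Y then Some u else lookup s' X
  end.

(* t sigma, followed by beta-normalisation (images are closed, so no capture) *)
Fixpoint app (s : subst) (t : tm) : tm :=
  match t with
  | Lam A b => Lam A (app s b)
  | Rig h ts => Rig h ((fix apps (l : list tm) : list tm :=
                          match l with [] => [] | u :: l' => app s u :: apps l' end) ts)
  | Flex F xs => match lookup s F with
                 | Some u => inst u xs
                 | None => Flex F xs
                 end
  end.

(* composition: sigma theta = first sigma, then theta *)
Definition scomp (s th : subst) : subst :=
  map (fun p => (fst p, app th (snd p))) s ++ th.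

Definition restrict (s : subst) (V : list fvar) : subst :=
  filter (fun p => if in_dec fvar_eq_dec (fst p) V then true else false) s.

Definition subst_vars (s : subst) : list fvar :=
  flat_map (fun p => fst p :: fv (snd p)) s.

(* Equations and problems: an equation t =?_{R,mu} s is a pair (t, s);
   a problem is a finite list of equations (read as a finite set). *)

Definition eqn := (tm * tm)%type.
Definition problem := list eqn.

Definition app_eqn (s : subst) (e : eqn) : eqn := (app s (fst e), app s (snd e)).
Definition app_pb (s : subst) (P : problem) : problem := map (app_eqn s) P.

Definition fv_pb (P : problem) : list fvar :=
  flat_map (fun e => fv (fst e) ++ fv (snd e)) P.

(* Typing: well-typed eta-long (except arguments of free variables, which are
   bound variables) higher-order patterns, in a context of bound variables. *)

Definition rhead_ty (G : list ty) (h : rhead) : option ty :=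
  match h with
  | BV i => nth_error G i
  | Cst c => Some (c_ty c)
  end.

Inductive wt : list ty -> tm -> ty -> Prop :=
| wt_lam G A b B :
    wt (A :: G) b B -> wt G (Lam A b) (TArr A B)
| wt_rig G h ts Cs D :
    rhead_ty G h = Some (arrows Cs D) -> is_base D ->
    Forall2 (wt G) ts Cs -> wt G (Rig h ts) D
| wt_flex G F xs As D :
    fv_ty F = arrows As D -> is_base D ->
    Forall2 (fun x A => nth_error G x = Some A) xs As ->
    NoDup xs -> wt G (Flex F xs) D.

Definition wt_eqn (e : eqn) : Prop :=
  exists G T, wt G (fst e) T /\ wt G (snd e) T.

Definition wt_pb (P : problem) : Prop := Forall wt_eqn P.

Definition wt_subst (s : subst) : Prop :=
  Forall (fun p => wt [] (snd p) (fv_ty (fst p))) s.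

(* R_A restricted to constants; on variables R_A is forced to be the
   equality indicator (reflexivity + R_A(x,y)=0 for distinct variables),
   and R_A(variable, constant) = 0. *)
Definition similarity (sim : cst -> cst -> R) : Prop :=
  (forall f g, (0 <= sim f g <= 1)%R) /\
  (forall f, sim f f = 1%R) /\
  (forall f g, sim f g = sim g f) /\
  (forall f g h, (Rmin (sim f g) (sim g h) <= sim f h)%R) /\
  (forall f g, c_ty f <> c_ty g -> sim f g = 0%R).

Definition Rhead (sim : cst -> cst -> R) (h g : rhead) : R :=
  match h, g with
  | BV i, BV j => if Nat.eq_dec i j then 1%R else 0%R
  | Cst f, Cst g' => sim f g'
  | _, _ => 0%R
  end.

Fixpoint Rtm (sim : cst -> cst -> R) (t s : tm) {struct t} : R :=
  match t, s with
  | Lam A t', Lam B s' => if ty_eq_dec A B then Rtm sim t' s' else 0%R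
  | Rig h ts, Rig g ss =>
      Rmin (Rhead sim h g)
        ((fix Rargs (l1 l2 : list tm) {struct l1} : R :=
            match l1, l2 with
            | [], [] => 1%R
            | u :: l1', v :: l2' => Rmin (Rtm sim u v) (Rargs l1' l2')
            | _, _ => 0%R
            end) ts ss)
  | Flex F xs, Flex G ys =>
      if fvar_eq_dec F G then
        if list_eq_dec Nat.eq_dec xs ys then 1%R else 0%R
      else 0%R
  | _, _ => 0%R
  end.

Fixpoint degree (sim : cst -> cst -> R) (s : subst) (P : problem) : R :=
  match P with
  | [] => 1%R
  | e :: P' => Rmin (Rtm sim (app s (fst e)) (app s (snd e))) (degree sim s P')
  end.

Definition unifier (sim : cst -> cst -> R) (mu : R) (s : subst)
  (P : problem) (d : R) : Prop :=
  degree sim s P = d /\ (mu <= d)%R.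

Fixpoint idx (x : nat) (xs : list nat) : nat :=
  match xs with
  | [] => 0
  | y :: xs' => if Nat.eq_dec x y then 0 else S (idx x xs')
  end.

(* de Bruijn index of the variable x of xs inside lambda xs. _ *)
Definition bidx (xs : list nat) (x : nat) : nat := length xs - 1 - idx x xs.

(* the list of bound-variable arguments x1..xn seen inside lambda x1..xn. _ *)
Definition eta_args (n : nat) : list nat := rev (seq 0 n).

Definition dflt_ty : ty := TBase 0.

Definition ve_state := (problem * subst)%type.

Definition ve_vars (st : ve_state) : list fvar :=
  fv_pb (fst st) ++ subst_vars (snd st).

(* [avoid]: variables of the surrounding HOPSU configuration, which fresh
   variables must also avoid *)
Inductive ve_step (avoid : list fvar) : ve_state -> ve_state -> Prop :=
| VE1 P1 P2 s F xs a a' ss As B Cs D Hs :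
    ((exists c, a = Cst c /\ a' = Cst c /\ c_ty c = arrows Cs D) \/
     (exists j, a = BV j /\ In j xs /\ a' = BV (bidx xs j) /\
                nth (idx j xs) As dflt_ty = arrows Cs D)) ->
    fv_ty F = arrows As B -> length As = length xs ->
    length Cs = length ss ->
    length Hs = length ss -> NoDup Hs ->
    (forall H, In H Hs -> ~ In H (avoid ++ ve_vars (P1 ++ (Flex F xs, Rig a ss) :: P2, s))) ->
    (forall i, i < length Hs -> fv_ty (nth i Hs (FV 0 dflt_ty)) = arrows As (nth i Cs dflt_ty)) ->
    ve_step avoid
      (P1 ++ (Flex F xs, Rig a ss) :: P2, s)
      (combine (map (fun H => Flex H xs) Hs) ss ++ (P1 ++ P2),
       scomp s [(F, lams As (Rig a' (map (fun H => Flex H (eta_args (length xs))) Hs)))])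
| VE2 P1 P2 s F xs G ys zs As B Bs B' H :
    NoDup zs -> (forall z, In z zs <-> In z xs /\ In z ys) ->
    fv_ty F = arrows As B -> length As = length xs ->
    fv_ty G = arrows Bs B' -> length Bs = length ys ->
    ~ In H (avoid ++ ve_vars (P1 ++ (Flex F xs, Flex G ys) :: P2, s)) ->
    fv_ty H = arrows (map (fun z => nth (idx z xs) As dflt_ty) zs) B ->
    let th := [(F, lams As (Flex H (map (bidx xs) zs)));
               (G, lams Bs (Flex H (map (bidx ys) zs)))] in
    ve_step avoid
      (P1 ++ (Flex F xs, Flex G ys) :: P2, s)
      (app_pb th (P1 ++ P2), scomp s th).

Definition var_elim (avoid : list fvar) (t s : tm) (phi : subst) : Prop :=
  clos_refl_trans _ (ve_step avoid) ([(t, s)], eps) ([], phi).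

(* One HOPSU step, labelled with the substitution theta and the degree d'
   contributed by the rule:  P; sigma; d  ~>  P'; sigma theta; d /\ d'.
   (Rules that do not change the substitution have theta = eps, rules that do
   not change the degree have d' = 1.  The Fail rule, leading to bottom, is
   not a transition to a configuration.)
   hopsu_step sim mu P sigma d P' theta d'. *)

Inductive hopsu_step (sim : cst -> cst -> R) (mu : R) :
  problem -> subst -> R -> problem -> subst -> R -> Prop :=
| H_Abs P1 P2 s d A t u :
    hopsu_step sim mu (P1 ++ (Lam A t, Lam A u) :: P2) s d
      ((t, u) :: (P1 ++ P2)) eps 1%R
| H_Dec P1 P2 s d h g ts ss :
    length ts = length ss ->
    (mu <= Rmin d (Rhead sim h g))%R ->
    hopsu_step sim mu (P1 ++ (Rig h ts, Rig g ss) :: P2) s d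
      (combine ts ss ++ (P1 ++ P2)) eps (Rhead sim h g)
| H_SV P1 P2 s d F xs ys zs As B H :
    length xs = length ys ->
    NoDup zs ->
    (forall z, In z zs <-> exists i, i < length xs /\
                  nth i xs 0 = z /\ nth i ys 0 = z) ->
    fv_ty F = arrows As B -> length As = length xs ->
    ~ In H (fv_pb (P1 ++ (Flex F xs, Flex F ys) :: P2) ++ subst_vars s) ->
    fv_ty H = arrows (map (fun z => nth (idx z xs) As dflt_ty) zs) B ->
    let th := [(F, lams As (Flex H (map (bidx xs) zs)))] in
    hopsu_step sim mu (P1 ++ (Flex F xs, Flex F ys) :: P2) s d
      (app_pb th (P1 ++ P2)) th 1%R
| H_Ori P1 P2 s d a ss F xs :
    ((exists c, a = Cst c) \/ (exists j, a = BV j /\ In j xs)) ->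
    hopsu_step sim mu (P1 ++ (Rig a ss, Flex F xs) :: P2) s d
      ((Flex F xs, Rig a ss) :: (P1 ++ P2)) eps 1%R
| H_LF P1 P2 s d F xs u phi :
    ((exists c ss, u = Rig (Cst c) ss) \/
     (exists G ys, u = Flex G ys) \/
     (exists j ss, u = Rig (BV j) ss /\ In j xs)) ->
    ~ In F (fv u) ->
    var_elim (fv_pb (P1 ++ (Flex F xs, u) :: P2) ++ subst_vars s)
             (Flex F xs) u phi ->
    let th := restrict phi (F :: fv u) in
    hopsu_step sim mu (P1 ++ (Flex F xs, u) :: P2) s d
      (app_pb th (P1 ++ P2)) th 1%R.

(* Every HOPSU rule either keeps the substitution and rewrites the problem in a way
   that changes its degree under [tau] only by the factor [d'] (Abs and Ori preserve
   similarity degrees, Dec splits off [R(f,g)]), or binds variables by a [theta] that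
   makes the selected equation syntactically equal (SV directly, LF by soundness of
   VarElim).  In the second case the selected equation has degree 1 under
   [theta tau], and every other equation has the same degree under [theta tau] as its
   [theta]-instance under [tau].

   That identity [t (theta tau) = (t theta) tau] is where typing enters: applying a
   binding [lams As w] to [F(y1..ym)] strips [length As] lambdas, so composition only
   commutes with application when each binding has as many leading lambdas as its
   variable has arguments, and when the images of [tau] are closed.

   VarElim is sound by an invariant: the left-hand variables of the pending
   equations occur once, the accumulated substitution is eta-shaped on the variables
   of the initial equation, and every Rig-compatible map equating the pending
   equations equates the two instantiated sides of the initial equation. *)

From Pilot Require Import Defs.
From Stdlib Require Import Reals List Arith Lia Lra Relations Permutation.
Import ListNotations.
Open Scope R_scope.
Local Notation app := Defs.app.

(** * Terms, renamings and substitutions *)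

Fixpoint tm_nested_ind (P : tm -> Prop)
  (HL : forall A b, P b -> P (Lam A b))
  (HR : forall h ts, Forall P ts -> P (Rig h ts))
  (HF : forall F xs, P (Flex F xs)) (t : tm) {struct t} : P t :=
  match t with
  | Lam A b => HL A b (tm_nested_ind P HL HR HF b)
  | Rig h ts => HR h ts ((fix go (l : list tm) : Forall P l :=
      match l with
      | [] => Forall_nil _
      | u :: l' => Forall_cons _ (tm_nested_ind P HL HR HF u) (go l')
      end) ts)
  | Flex F xs => HF F xs
  end.

Definition ren_head (r : nat -> nat) (h : rhead) : rhead :=
  match h with BV i => BV (r i) | Cst c => Cst c end.

Lemma ren_Rig r h ts : ren r (Rig h ts) = Rig (ren_head r h) (map (ren r) ts).
Proof. simpl; f_equal; induction ts; simpl; congruence. Qed.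

Lemma app_Rig s h ts : app s (Rig h ts) = Rig h (map (app s) ts).
Proof. simpl; f_equal; induction ts; simpl; congruence. Qed.

Lemma fv_Rig h ts : fv (Rig h ts) = flat_map fv ts.
Proof. simpl; induction ts; simpl; congruence. Qed.

Lemma fv_lams As w : fv (lams As w) = fv w.
Proof. induction As; simpl; auto. Qed.

Lemma strip_lams As w : strip (length As) (lams As w) = w.
Proof. induction As; simpl; auto. Qed.

Lemma app_lams s As w : app s (lams As w) = lams As (app s w).
Proof. induction As; simpl; congruence. Qed.

Lemma app_nil t : app [] t = t.
Proof.
  induction t using tm_nested_ind; simpl; f_equal; auto.
  induction H; simpl; congruence.
Qed.

Lemma app_ext s1 s2 t : (forall X, In X (fv t) -> lookup s1 X = lookup s2 X) ->
  app s1 t = app s2 t.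
Proof.
  induction t using tm_nested_ind; intros E.
  - simpl in *; f_equal; auto.
  - rewrite !app_Rig. f_equal. rewrite fv_Rig in E. induction H; simpl in *; auto.
    f_equal; [apply H | apply IHForall]; intros; apply E, in_or_app; auto.
  - simpl in *; rewrite E; auto.
Qed.

Lemma app_fresh th t : (forall X, In X (fv t) -> lookup th X = None) -> app th t = t.
Proof. intros H. rewrite (app_ext th []); [apply app_nil | intros X HX; rewrite H; auto]. Qed.

Fixpoint flex_occs (t : tm) : list (fvar * nat) :=
  match t with
  | Lam _ b => flex_occs b
  | Rig _ ts => (fix go (l : list tm) :=
      match l with [] => [] | u :: l' => flex_occs u ++ go l' end) ts
  | Flex F xs => [(F, length xs)]
  end.

Lemma flex_occs_Rig h ts : flex_occs (Rig h ts) = flat_map flex_occs ts.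
Proof. simpl; induction ts; simpl; congruence. Qed.

Lemma flex_occs_lams As w : flex_occs (lams As w) = flex_occs w.
Proof. induction As; simpl; auto. Qed.

Lemma flex_occs_ren t : forall r, flex_occs (ren r t) = flex_occs t.
Proof.
  induction t using tm_nested_ind; intros r.
  - simpl; auto.
  - rewrite ren_Rig, !flex_occs_Rig. induction H; simpl; congruence.
  - simpl; rewrite length_map; auto.
Qed.

Lemma fv_ren t : forall r, fv (ren r t) = fv t.
Proof.
  induction t using tm_nested_ind; intros r; [simpl; auto | | simpl; auto].
  rewrite ren_Rig, !fv_Rig. induction H; simpl; congruence.
Qed.

Lemma flex_occs_strip n t : flex_occs (strip n t) = flex_occs t.
Proof. revert t; induction n; intros []; simpl; auto. Qed.

Lemma fv_strip n t : fv (strip n t) = fv t.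
Proof. revert t; induction n; intros []; simpl; auto. Qed.

Lemma flex_occs_inst u xs : flex_occs (inst u xs) = flex_occs u.
Proof. unfold inst. rewrite flex_occs_ren, flex_occs_strip. auto. Qed.

Lemma fv_inst u xs : fv (inst u xs) = fv u.
Proof. unfold inst. rewrite fv_ren, fv_strip. auto. Qed.

Lemma fv_flex_occs t X : In X (fv t) <-> exists k, In (X, k) (flex_occs t).
Proof.
  induction t using tm_nested_ind.
  - simpl; auto.
  - rewrite fv_Rig, flex_occs_Rig. induction H; simpl; [firstorder|].
    rewrite in_app_iff, H, IHForall.
    split; [intros [[k Hk]|[k Hk]] | intros [k Hk]; apply in_app_or in Hk as [Hk|Hk]];
      eauto using in_or_app.
  - simpl. split; [intros [<-|[]]; eauto | intros [k [Hk|[]]]; injection Hk; auto].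
Qed.

Lemma flex_occs_app th t p : In p (flex_occs (app th t)) ->
  In p (flex_occs t) \/ exists Y u, lookup th Y = Some u /\ In p (flex_occs u).
Proof.
  induction t using tm_nested_ind; intros Hp.
  - simpl in *; auto.
  - rewrite app_Rig, flex_occs_Rig in Hp. rewrite flex_occs_Rig.
    induction H; simpl in *; auto. rewrite in_app_iff in *.
    destruct Hp as [Hp|Hp]; [destruct (H Hp) | destruct (IHForall Hp)]; tauto.
  - simpl in *. destruct (lookup th F) as [u|] eqn:E; auto.
    rewrite flex_occs_inst in Hp. eauto.
Qed.

Fixpoint bounded (k : nat) (t : tm) : Prop :=
  match t with
  | Lam _ b => bounded (S k) b
  | Rig h ts => (match h with BV i => i < k | Cst _ => True end)%nat /\
      (fix go (l : list tm) :=
         match l with [] => True | u :: l' => bounded k u /\ go l' end) ts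
  | Flex _ xs => Forall (fun x => x < k)%nat xs
  end.

Lemma bounded_Rig k h ts : bounded k (Rig h ts) <->
  (match h with BV i => i < k | Cst _ => True end)%nat /\ Forall (bounded k) ts.
Proof.
  simpl. split; intros [H1 H2]; split; auto; clear H1; induction ts; simpl in *; auto.
  - destruct H2; constructor; auto.
  - inversion H2 as [|? ? Ha Hts]; subst; split; [exact Ha | apply IHts; exact Hts].
Qed.

Lemma bounded_mono t : forall k k', (k <= k')%nat -> bounded k t -> bounded k' t.
Proof.
  induction t using tm_nested_ind; intros k k' Hk Hb.
  - simpl in *. apply (IHt (S k)); auto. lia.
  - apply bounded_Rig in Hb as [Hh Hts]. apply bounded_Rig. split.
    + destruct h; auto; lia.
    + induction H; auto. inversion Hts; subst. constructor; eauto.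
  - simpl in *. eapply Forall_impl; [|eauto]. simpl; lia.
Qed.

Lemma bounded_strip n : forall t k, bounded k t -> bounded (k + n) (strip n t).
Proof.
  induction n; intros t k Hb; simpl.
  - rewrite Nat.add_0_r. auto.
  - destruct t; (eapply bounded_mono; [|eauto]; lia).
Qed.

Lemma bounded_lams As : forall w k, bounded (k + length As) w -> bounded k (lams As w).
Proof.
  induction As; intros w k Hb; simpl in *.
  - rewrite Nat.add_0_r in Hb; auto.
  - apply IHAs. replace (S k + length As)%nat with (k + S (length As))%nat by lia. auto.
Qed.

Lemma ren_ext_bounded t : forall k r1 r2, bounded k t ->
  (forall i, (i < k)%nat -> r1 i = r2 i) -> ren r1 t = ren r2 t.
Proof.
  induction t using tm_nested_ind; intros k r1 r2 Hb E.
  - simpl in *. f_equal. apply (IHt (S k)); auto. intros [|i] Hi; simpl; auto.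
    f_equal. apply E. lia.
  - rewrite !ren_Rig. apply bounded_Rig in Hb as [Hh Hts]. f_equal.
    + destruct h; simpl; f_equal; auto.
    + induction H; simpl; auto. inversion Hts; subst. f_equal; eauto.
  - simpl in *. f_equal. apply map_ext_in. intros a Ha. apply E.
    rewrite Forall_forall in Hb. auto.
Qed.

Lemma ren_ext t : forall r1 r2, (forall i, r1 i = r2 i) -> ren r1 t = ren r2 t.
Proof.
  induction t using tm_nested_ind; intros r1 r2 E.
  - simpl. f_equal. apply IHt. intros [|i]; simpl; auto.
  - rewrite !ren_Rig. f_equal; [destruct h; simpl; auto|].
    induction H; simpl; auto. f_equal; auto.
  - simpl. f_equal. apply map_ext; auto.
Qed.

Lemma ren_comp t : forall r1 r2, ren r1 (ren r2 t) = ren (fun i => r1 (r2 i)) t.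
Proof.
  induction t using tm_nested_ind; intros r1 r2.
  - simpl. f_equal. rewrite IHt. apply ren_ext. intros [|i]; simpl; auto.
  - rewrite !ren_Rig. f_equal; [destruct h; simpl; auto|].
    rewrite map_map. induction H; simpl; auto. f_equal; auto.
  - simpl. f_equal. rewrite map_map. auto.
Qed.

Definition closed_subst (s : subst) : Prop :=
  forall X v, lookup s X = Some v -> bounded 0 v.

Lemma lookup_scomp s th X : lookup (scomp s th) X =
  match lookup s X with Some u => Some (app th u) | None => lookup th X end.
Proof.
  unfold scomp. induction s as [|[Y u] s IH]; simpl; auto.
  destruct (fvar_eq_dec X Y); auto.
Qed.

Definition inst_ren (ys : list nat) (i : nat) : nat :=
  if (i <? length ys)%nat then nth (length ys - 1 - i) ys 0%nat else (i - length ys)%nat.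

Lemma inst_as_ren u ys : inst u ys = ren (inst_ren ys) (strip (length ys) u).
Proof. reflexivity. Qed.

Lemma nth_map_lt (f : nat -> nat) l i : (i < length l)%nat ->
  nth i (map f l) 0%nat = f (nth i l 0%nat).
Proof.
  intros Hi. rewrite nth_indep with (d' := f 0%nat) by (rewrite length_map; auto).
  apply map_nth.
Qed.

(* Closed images are not affected by renaming their free de Bruijn indices. *)
Lemma app_ren tau t : closed_subst tau -> forall r, app tau (ren r t) = ren r (app tau t).
Proof.
  intros Hc. induction t using tm_nested_ind; intros r.
  - simpl. f_equal. auto.
  - rewrite ren_Rig, !app_Rig, ren_Rig. f_equal. rewrite !map_map.
    induction H; simpl; auto. f_equal; auto.
  - simpl. destruct (lookup tau F) as [v|] eqn:E; auto.
    rewrite !inst_as_ren, length_map, ren_comp.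
    apply ren_ext_bounded with (k := length xs).
    + apply (bounded_strip _ _ 0). eapply Hc; eauto.
    + intros i Hi. unfold inst_ren. rewrite length_map.
      destruct (Nat.ltb_spec i (length xs)); [|lia]. apply nth_map_lt. lia.
Qed.

Definition arities_match (th : subst) (t : tm) : Prop :=
  Forall (fun p => forall u, lookup th (fst p) = Some u ->
            exists As w, u = lams As w /\ length As = snd p) (flex_occs t).

Lemma app_scomp th tau t : closed_subst tau -> arities_match th t ->
  app (scomp th tau) t = app tau (app th t).
Proof.
  intros Hc. unfold arities_match. induction t using tm_nested_ind; intros Hm.
  - simpl in *. f_equal. auto.
  - rewrite !app_Rig. rewrite flex_occs_Rig in Hm. f_equal. rewrite map_map.
    induction H; simpl; auto. simpl in Hm. apply Forall_app in Hm as [H1 H2].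
    f_equal; auto.
  - simpl. rewrite lookup_scomp. destruct (lookup th F) as [u|] eqn:E; auto.
    inversion Hm as [|? ? Hp]; subst. destruct (Hp u E) as [As [w [-> Hl]]].
    simpl in Hl. rewrite !inst_as_ren, app_lams, <- Hl, !strip_lams, app_ren; auto.
Qed.

(** * Similarity degrees *)

Ltac solve_Rmin := unfold Rmin in *; repeat destruct Rle_dec; lra.

Fixpoint Rargs (sim : cst -> cst -> R) (l1 l2 : list tm) : R :=
  match l1, l2 with
  | [], [] => 1
  | u :: l1', v :: l2' => Rmin (Rtm sim u v) (Rargs sim l1' l2')
  | _, _ => 0
  end.

Lemma Rtm_Rig sim h g ts ss :
  Rtm sim (Rig h ts) (Rig g ss) = Rmin (Rhead sim h g) (Rargs sim ts ss).
Proof. simpl. f_equal. revert ss; induction ts; destruct ss; simpl; auto. rewrite IHts; auto. Qed.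

Lemma Rtm_refl sim t : (forall f, sim f f = 1) -> Rtm sim t t = 1.
Proof.
  intros Hs. induction t using tm_nested_ind.
  - simpl. destruct ty_eq_dec; tauto.
  - rewrite Rtm_Rig. replace (Rhead sim h h) with 1.
    + replace (Rargs sim ts ts) with 1; [solve_Rmin|].
      induction H; simpl; auto. rewrite H, <- IHForall. solve_Rmin.
    + destruct h; simpl; auto. destruct Nat.eq_dec; tauto.
  - simpl. destruct fvar_eq_dec; [|tauto]. destruct list_eq_dec; tauto.
Qed.

Lemma Rtm_sym sim t : (forall f g, sim f g = sim g f) -> forall s, Rtm sim t s = Rtm sim s t.
Proof.
  intros Hs. induction t using tm_nested_ind; intros s; destruct s; try reflexivity.
  - simpl. destruct (ty_eq_dec t0 A), (ty_eq_dec A t0); subst; try tauto. auto.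
  - rewrite !Rtm_Rig. f_equal.
    + destruct h, r; simpl; auto. destruct (Nat.eq_dec n n0), (Nat.eq_dec n0 n); subst; tauto.
    + revert l; induction H; intros []; simpl; auto. rewrite H, IHForall. auto.
  - simpl. destruct (fvar_eq_dec F f), (fvar_eq_dec f F); subst; try tauto.
    destruct (list_eq_dec Nat.eq_dec xs l), (list_eq_dec Nat.eq_dec l xs); subst; tauto.
Qed.

Lemma degree_le1 sim s P : degree sim s P <= 1.
Proof.
  induction P as [|e P IH]; simpl; [lra|].
  pose proof (Rmin_r (Rtm sim (app s (fst e)) (app s (snd e))) (degree sim s P)). lra.
Qed.

Lemma degree_app sim s P1 P2 :
  degree sim s (P1 ++ P2) = Rmin (degree sim s P1) (degree sim s P2).
Proof.
  induction P1; simpl.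
  - pose proof (degree_le1 sim s P2). solve_Rmin.
  - rewrite IHP1, Rmin_assoc. auto.
Qed.

Lemma degree_mid sim s P1 e P2 : degree sim s (P1 ++ e :: P2) =
  Rmin (Rtm sim (app s (fst e)) (app s (snd e))) (degree sim s (P1 ++ P2)).
Proof. rewrite !degree_app. simpl. solve_Rmin. Qed.

Lemma degree_combine sim s ts ss : length ts = length ss ->
  degree sim s (combine ts ss) = Rargs sim (map (app s) ts) (map (app s) ss).
Proof. revert ss; induction ts; intros [] L; simpl in *; try congruence. rewrite IHts; auto. Qed.

Lemma degree_Abs sim tau P1 A t u P2 :
  degree sim tau (P1 ++ (Lam A t, Lam A u) :: P2) = degree sim tau ((t, u) :: P1 ++ P2).
Proof. rewrite degree_mid. simpl. destruct ty_eq_dec; tauto. Qed.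

Lemma degree_Dec sim tau P1 h g ts ss P2 : length ts = length ss ->
  degree sim tau (P1 ++ (Rig h ts, Rig g ss) :: P2) =
  Rmin (Rhead sim h g) (degree sim tau (combine ts ss ++ P1 ++ P2)).
Proof.
  intros L. rewrite degree_mid, (degree_app _ _ (combine ts ss)), degree_combine by exact L.
  cbn [fst snd]. rewrite !app_Rig, Rtm_Rig, Rmin_assoc. auto.
Qed.

Lemma degree_Ori sim tau P1 t u P2 : (forall f g, sim f g = sim g f) ->
  degree sim tau (P1 ++ (t, u) :: P2) = degree sim tau ((u, t) :: P1 ++ P2).
Proof. intros Hs. rewrite degree_mid. simpl. rewrite Rtm_sym by exact Hs. auto. Qed.

Lemma degree_app_pb sim s1 s2 s3 P :
  (forall e, In e P -> app s1 (fst e) = app s2 (app s3 (fst e)) /\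
    app s1 (snd e) = app s2 (app s3 (snd e))) ->
  degree sim s1 P = degree sim s2 (app_pb s3 P).
Proof.
  induction P as [|e P IH]; simpl; intros H; auto.
  destruct (H e) as [-> ->]; auto. rewrite IH; auto.
Qed.

Lemma unifier_of_degree sim mu theta tau P P' d' d'' :
  degree sim (scomp theta tau) P = Rmin d' (degree sim tau P') -> mu <= d' ->
  unifier sim mu tau P' d'' -> unifier sim mu (scomp theta tau) P (Rmin d' d'').
Proof.
  intros E Hd' [Hdeg Hmu]. split; [congruence|]. apply Rmin_glb; auto.
Qed.

Lemma unifier_of_degree_eq sim mu theta tau P P' d'' :
  degree sim (scomp theta tau) P = degree sim tau P' -> mu <= 1 ->
  unifier sim mu tau P' d'' -> unifier sim mu (scomp theta tau) P (Rmin 1 d'').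
Proof.
  intros E. apply unifier_of_degree.
  rewrite E, Rmin_right; auto using degree_le1.
Qed.

(** * Typing and eta-long bindings *)

Definition has_arity (X : fvar) (k : nat) : Prop :=
  exists As D, fv_ty X = arrows As D /\ is_base D /\ length As = k.

Definition arities_ok (t : tm) : Prop :=
  Forall (fun p => has_arity (fst p) (snd p)) (flex_occs t).

Definition eta_shaped (X : fvar) (u : tm) : Prop :=
  exists As D w, fv_ty X = arrows As D /\ is_base D /\ u = lams As w.

Definition shaped_on (V : list fvar) (s : subst) : Prop :=
  forall X u, In X V -> lookup s X = Some u -> eta_shaped X u.

Lemma arrows_base_inj As : forall As' D D', is_base D -> is_base D' ->
  arrows As D = arrows As' D' -> As = As'.
Proof.
  induction As; intros [|A' As'] D D' [n ->] [n' ->] E; simpl in *; try discriminate; auto.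
  injection E as -> E. f_equal. eapply IHAs; eauto; eexists; eauto.
Qed.

Lemma arrows_length_inj As : forall As' B B', length As = length As' ->
  arrows As B = arrows As' B' -> As = As' /\ B = B'.
Proof.
  induction As; intros [|A' As'] B B' L E; simpl in *; try discriminate; auto.
  injection E as -> E. destruct (IHAs As' B B') as [-> ->]; auto.
Qed.

Lemma has_arity_arrows X As D k : fv_ty X = arrows As D -> is_base D ->
  has_arity X k -> length As = k.
Proof.
  intros E B [As' [D' [E' [B' <-]]]]. rewrite E in E'.
  rewrite (arrows_base_inj As As' D D'); auto.
Qed.

Lemma eta_shaped_lams X As B w : fv_ty X = arrows As B ->
  has_arity X (length As) -> eta_shaped X (lams As w).
Proof.
  intros E [As' [D [E' [HD L']]]]. rewrite E in E'.
  destruct (arrows_length_inj As As' B D) as [_ ->]; auto.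
  exists As, D, w. auto.
Qed.

Lemma arities_match_of_shaped V s t : shaped_on V s -> incl (fv t) V ->
  arities_ok t -> arities_match s t.
Proof.
  intros Hs Hi Ht. unfold arities_ok, arities_match in *. rewrite Forall_forall in *.
  intros [X k] Hp u E. simpl.
  assert (HX : In X V) by (apply Hi, fv_flex_occs; eauto).
  destruct (Hs X u HX E) as [As [D [w [E1 [B ->]]]]]. exists As, w. split; auto.
  eapply has_arity_arrows; eauto. apply (Ht _ Hp).
Qed.

Lemma wt_arities_ok t : forall G T, wt G t T -> arities_ok t.
Proof.
  unfold arities_ok. induction t using tm_nested_ind; intros G T Hw;
    inversion Hw as [G0 A0 b0 B0 Hb | G0 h0 ts0 Cs D Hh HD Hf | G0 F0 xs0 As D HF HD Hf Hnd]; subst.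
  - simpl. eauto.
  - rewrite flex_occs_Rig. clear Hw Hh. revert Cs Hf. induction H; intros Cs Hf; simpl; auto.
    inversion Hf; subst. apply Forall_app. split; eauto.
  - simpl. constructor; auto. exists As, T. repeat split; auto.
    symmetry. eapply Forall2_length; eauto.
Qed.

Lemma wt_bounded t : forall G T, wt G t T -> bounded (length G) t.
Proof.
  induction t using tm_nested_ind; intros G T Hw;
    inversion Hw as [G0 A0 b0 B0 Hb | G0 h0 ts0 Cs D Hh HD Hf | G0 F0 xs0 As D HF HD Hf Hnd]; subst.
  - exact (IHt _ _ Hb).
  - apply bounded_Rig. split.
    + destruct h; simpl in *; auto. apply nth_error_Some. congruence.
    + clear Hw Hh. revert Cs Hf. induction H; intros Cs Hf; auto.
      inversion Hf; subst. constructor; eauto.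
  - simpl. clear Hnd Hw HF. induction Hf; constructor; auto.
    apply nth_error_Some. congruence.
Qed.

Lemma wt_subst_closed s : wt_subst s -> closed_subst s.
Proof.
  intros Hs X v E. unfold wt_subst in Hs. rewrite Forall_forall in Hs.
  assert (Hin : In (X, v) s).
  { induction s as [|[Y u] s IH]; simpl in *; try discriminate.
    destruct (fvar_eq_dec X Y); [injection E as ->; subst; auto | auto]. }
  exact (wt_bounded _ _ _ (Hs _ Hin)).
Qed.

Lemma wt_Flex_inv G F xs T : wt G (Flex F xs) T -> NoDup xs /\ has_arity F (length xs).
Proof.
  intros Hw; inversion Hw; subst. split; auto. exists As, T. repeat split; auto.
  symmetry. eapply Forall2_length; eauto.
Qed.

Lemma wt_pb_arities_ok P e : wt_pb P -> In e P -> arities_ok (fst e) /\ arities_ok (snd e).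
Proof.
  intros HP He. unfold wt_pb in HP. rewrite Forall_forall in HP.
  destruct (HP e He) as [G [T [H1 H2]]]. split; eapply wt_arities_ok; eauto.
Qed.

(** * Positions of bound variables *)

Lemma idx_lt z xs : In z xs -> (idx z xs < length xs)%nat.
Proof.
  induction xs; simpl; intros H; [tauto|]. destruct Nat.eq_dec; [lia|].
  destruct H; [congruence|]. specialize (IHxs H); lia.
Qed.

Lemma nth_idx z xs : In z xs -> nth (idx z xs) xs 0%nat = z.
Proof.
  induction xs; simpl; intros H; [tauto|]. destruct Nat.eq_dec; auto.
  destruct H; [congruence|]. auto.
Qed.

Lemma idx_nth xs i : NoDup xs -> (i < length xs)%nat -> idx (nth i xs 0%nat) xs = i.
Proof.
  revert i; induction xs; simpl; intros i Hn Hi; [lia|]. inversion Hn; subst.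
  destruct i; simpl; destruct Nat.eq_dec; try congruence.
  - exfalso. apply H1. rewrite <- e. apply nth_In. lia.
  - f_equal. apply IHxs; auto. lia.
Qed.

Lemma bidx_lt xs z : In z xs -> (bidx xs z < length xs)%nat.
Proof. intros H. pose proof (idx_lt z xs H). unfold bidx. lia. Qed.

Lemma inst_ren_bidx xs ys z : In z xs -> length ys = length xs ->
  inst_ren ys (bidx xs z) = nth (idx z xs) ys 0%nat.
Proof.
  intros H L. pose proof (idx_lt z xs H). unfold inst_ren, bidx. rewrite L.
  destruct (Nat.ltb_spec (length xs - 1 - idx z xs) (length xs)); [|lia].
  f_equal. lia.
Qed.

Lemma map_inst_ren_eta_args xs : map (inst_ren xs) (eta_args (length xs)) = xs.
Proof.
  unfold eta_args. apply nth_ext with (d := 0%nat) (d' := 0%nat).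
  - rewrite length_map, length_rev, length_seq. auto.
  - intros n Hn. rewrite length_map, length_rev, length_seq in Hn.
    rewrite nth_map_lt by (rewrite length_rev, length_seq; auto).
    rewrite rev_nth, length_seq, seq_nth by (rewrite ?length_seq; lia). simpl.
    unfold inst_ren. destruct (Nat.ltb_spec (length xs - S n) (length xs)); [|lia].
    f_equal. lia.
Qed.

Lemma inst_lams_Flex As xs ys H zs : length As = length xs -> length ys = length xs ->
  (forall z, In z zs -> In z xs /\ nth (idx z xs) ys 0%nat = z) ->
  inst (lams As (Flex H (map (bidx xs) zs))) ys = Flex H zs.
Proof.
  intros L L2 Hz. rewrite inst_as_ren, L2, <- L, strip_lams. simpl. f_equal.
  rewrite map_map, <- map_id. apply map_ext_in. intros z Hin.
  destruct (Hz z Hin). rewrite inst_ren_bidx; auto.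
Qed.

(** * Soundness of VarElim *)

Lemma in_fv_pb P e : In e P -> incl (fv (fst e) ++ fv (snd e)) (fv_pb P).
Proof. intros He X HX. apply in_flat_map. eauto. Qed.

Definition occ (l : list fvar) (X : fvar) : nat := count_occ fvar_eq_dec l X.

Definition flex_occs_pb (Q : problem) : list (fvar * nat) :=
  flat_map (fun e => flex_occs (fst e) ++ flex_occs (snd e)) Q.

Lemma flat_map_mid_perm {A B : Type} (g : A -> list B) P1 e P2 :
  Permutation (flat_map g (P1 ++ e :: P2)) (g e ++ flat_map g (P1 ++ P2)).
Proof. rewrite !flat_map_app. simpl. apply Permutation_app_swap_app. Qed.

Lemma occ_mid P1 e P2 X : occ (fv_pb (P1 ++ e :: P2)) X =
  (occ (fv (fst e)) X + occ (fv (snd e)) X + occ (fv_pb (P1 ++ P2)) X)%nat.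
Proof.
  unfold occ, fv_pb.
  rewrite (proj1 (Permutation_count_occ fvar_eq_dec _ _) (flat_map_mid_perm _ P1 e P2)).
  cbv beta. rewrite !count_occ_app. reflexivity.
Qed.

Lemma in_fv_mid P1 e P2 X : In X (fv_pb (P1 ++ e :: P2)) <->
  In X (fv (fst e)) \/ In X (fv (snd e)) \/ In X (fv_pb (P1 ++ P2)).
Proof.
  unfold fv_pb. rewrite <- !in_app_iff, app_assoc. split; apply Permutation_in;
    [|symmetry]; apply (flat_map_mid_perm (fun e => fv (fst e) ++ fv (snd e))).
Qed.

Lemma in_flex_occs_mid P1 e P2 p : In p (flex_occs_pb (P1 ++ e :: P2)) <->
  In p (flex_occs (fst e)) \/ In p (flex_occs (snd e)) \/ In p (flex_occs_pb (P1 ++ P2)).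
Proof.
  unfold flex_occs_pb. rewrite <- !in_app_iff, app_assoc. split; apply Permutation_in;
    [|symmetry]; apply (flat_map_mid_perm (fun e => flex_occs (fst e) ++ flex_occs (snd e))).
Qed.

Lemma fv_pb_app P1 P2 : fv_pb (P1 ++ P2) = fv_pb P1 ++ fv_pb P2.
Proof. apply flat_map_app. Qed.

Lemma flex_occs_pb_app P1 P2 : flex_occs_pb (P1 ++ P2) = flex_occs_pb P1 ++ flex_occs_pb P2.
Proof. apply flat_map_app. Qed.

Lemma in_flex_occs_pb P p :
  In p (flex_occs_pb P) <-> exists e, In e P /\ In p (flex_occs (fst e) ++ flex_occs (snd e)).
Proof. apply in_flat_map. Qed.

Lemma occ_app_pb th P K : lookup th K = None ->
  (forall Y u, lookup th Y = Some u -> ~ In K (fv u)) ->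
  occ (fv_pb (app_pb th P)) K = occ (fv_pb P) K.
Proof.
  intros HK Hu.
  assert (Ht : forall t, occ (fv (app th t)) K = occ (fv t) K).
  { unfold occ. induction t using tm_nested_ind.
    - simpl; auto.
    - rewrite app_Rig, !fv_Rig. induction H; simpl; auto. rewrite !count_occ_app. congruence.
    - simpl. destruct (lookup th F) as [u|] eqn:E.
      + rewrite fv_inst, (proj1 (count_occ_not_In _ _ _) (Hu _ _ E)).
        destruct (fvar_eq_dec F K); congruence.
      + reflexivity. }
  induction P as [|e P IH]; simpl; auto.
  unfold occ, fv_pb in *. simpl. rewrite !count_occ_app, IH. f_equal. f_equal; apply Ht.
Qed.

Lemma shaped_on_scomp V s th : shaped_on V s -> shaped_on V th -> shaped_on V (scomp s th).
Proof.
  intros Hs Ht X u HX E. rewrite lookup_scomp in E. destruct (lookup s X) as [v|] eqn:Ev.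
  - injection E as <-. destruct (Hs X v HX Ev) as [As [D [w [E1 [B ->]]]]].
    exists As, D, (app th w). rewrite app_lams. auto.
  - eauto.
Qed.

Lemma app_single_fresh F v t : ~ In F (fv t) -> app [(F, v)] t = t.
Proof.
  intros Ht. apply app_fresh. intros X HX. simpl. destruct fvar_eq_dec; subst; tauto.
Qed.

Definition rig_compatible (f : tm -> tm) : Prop :=
  forall h l1 l2, map f l1 = map f l2 -> f (Rig h l1) = f (Rig h l2).

(* VE1 does not instantiate the rest of the problem; that is sound only because the
   left-hand variable of every pending equation occurs nowhere else. *)
Definition lhs_linear (Q : problem) : Prop :=
  Forall (fun e => exists X xs, fst e = Flex X xs /\ occ (fv_pb Q) X = 1%nat) Q.

Definition arities_ok_on (V : list fvar) (Q : problem) : Prop :=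
  forall X k, In (X, k) (flex_occs_pb Q) -> In X V -> has_arity X k.

Lemma lhs_linear_selected P1 F xs r P2 : lhs_linear (P1 ++ (Flex F xs, r) :: P2) ->
  ~ In F (fv r) /\ ~ In F (fv_pb (P1 ++ P2)).
Proof.
  intros HL. unfold lhs_linear in HL. rewrite Forall_forall in HL.
  destruct (HL (Flex F xs, r)) as [X [ys [E C]]]; [apply in_or_app; right; left; auto|].
  injection E as <- _. rewrite occ_mid in C. unfold occ in C. simpl in C.
  destruct fvar_eq_dec; [|tauto].
  split; intros Hin; apply (count_occ_In fvar_eq_dec) in Hin; unfold eqn, problem in *; lia.
Qed.

Lemma lhs_linear_tail P1 e P2 e' : lhs_linear (P1 ++ e :: P2) -> In e' (P1 ++ P2) ->
  exists X xs, fst e' = Flex X xs /\ In X (fv_pb (P1 ++ P2)) /\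
    occ (fv_pb (P1 ++ e :: P2)) X = 1%nat.
Proof.
  intros HL He'. unfold lhs_linear in HL. rewrite Forall_forall in HL.
  destruct (HL e') as [X [xs [E C]]].
  { apply in_app_or in He' as [?|?]; apply in_or_app; simpl; auto. }
  exists X, xs. repeat split; auto. apply (in_fv_pb _ _ He'). rewrite E. simpl. auto.
Qed.

Definition head_under (xs : list nat) (a a' : rhead) : Prop :=
  (exists c, a = Cst c /\ a' = Cst c) \/
  (exists j, a = BV j /\ In j xs /\ a' = BV (bidx xs j)).

Lemma combine_Flex_in xs (Hs : list fvar) (ss : list tm) e :
  In e (combine (map (fun H => Flex H xs) Hs) ss) ->
  exists H s, e = (Flex H xs, s) /\ In H Hs /\ In s ss.
Proof.
  destruct e as [x y]. intros Hin. pose proof (in_combine_r _ _ _ _ Hin) as Hy.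
  apply in_combine_l, in_map_iff in Hin as [H [<- HH]]. eauto.
Qed.

Lemma occ_combine_Flex xs (Hs : list fvar) (ss : list tm) X : length Hs = length ss ->
  occ (fv_pb (combine (map (fun H => Flex H xs) Hs) ss)) X =
  (occ Hs X + occ (flat_map fv ss) X)%nat.
Proof.
  unfold occ. revert ss; induction Hs; intros [|s ss] L; simpl in *; try discriminate; auto.
  injection L as L. specialize (IHHs ss L). unfold fv_pb in *. simpl.
  rewrite !count_occ_app in *. simpl. destruct fvar_eq_dec; simpl; lia.
Qed.

Lemma combine_equated (f : tm -> tm) l1 l2 : length l1 = length l2 ->
  Forall (fun e => f (fst e) = f (snd e)) (combine l1 l2) -> map f l1 = map f l2.
Proof.
  revert l2; induction l1; intros [] L HF; simpl in *; try discriminate; auto.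
  inversion HF; subst. f_equal; auto.
Qed.

Section VarElimSound.

Variables (avoid : list fvar) (F0 : fvar) (xs0 : list nat) (u0 : tm).
Let V := F0 :: fv u0.
Hypothesis V_avoided : incl V avoid.
Hypothesis F0_arity : has_arity F0 (length xs0).
Hypothesis u0_arities : arities_ok u0.

(* Quantifying over Rig-compatible maps rather than using equality lets VE1 replace
   [F(xs) =? a(ss)] by the argument equations: a map equating the arguments equates
   [a(H1(xs), ..)] with [a(ss)]. *)
Definition reduces_goal (Q : problem) (s : subst) : Prop :=
  forall f, rig_compatible f -> Forall (fun e => f (fst e) = f (snd e)) Q ->
  f (app s (Flex F0 xs0)) = f (app s u0).

Definition ve_invariant (st : ve_state) : Prop :=
  lhs_linear (fst st) /\ arities_ok_on V (fst st) /\ shaped_on V (snd st) /\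
  reduces_goal (fst st) (snd st).

Lemma fresh_for_ve_state H Q s : ~ In H (avoid ++ ve_vars (Q, s)) ->
  ~ In H V /\ ~ In H (fv_pb Q).
Proof. unfold ve_vars. simpl. rewrite !in_app_iff. intros Hn. split; intros C; apply Hn; auto. Qed.

Lemma reduces_goal_scomp Q s Q' th : reduces_goal Q s -> closed_subst th -> shaped_on V s ->
  (forall f, rig_compatible f -> Forall (fun e => f (fst e) = f (snd e)) Q' ->
     Forall (fun e => f (app th (fst e)) = f (app th (snd e))) Q) ->
  reduces_goal Q' (scomp s th).
Proof.
  intros HU Hc Hs Hstep f Hf HQ'.
  assert (M0 : arities_match s (Flex F0 xs0)).
  { eapply arities_match_of_shaped; eauto.
    - intros X [<-|[]]. left. auto.
    - repeat constructor. auto. }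
  assert (M1 : arities_match s u0).
  { eapply arities_match_of_shaped; eauto. intros X HX. right. auto. }
  rewrite !app_scomp by auto.
  apply (HU (fun t => f (app th t))); auto.
  intros h l1 l2 E. rewrite !app_Rig. apply Hf. rewrite !map_map. exact E.
Qed.

Section Imitation.

Variables (P1 P2 : problem) (s : subst) (F : fvar) (xs : list nat) (a a' : rhead)
  (ss : list tm) (As : list ty) (B : ty) (Hs : list fvar).
Let Q := P1 ++ (Flex F xs, Rig a ss) :: P2.
Let th := [(F, lams As (Rig a' (map (fun H => Flex H (eta_args (length xs))) Hs)))].
Let Q' := combine (map (fun H => Flex H xs) Hs) ss ++ (P1 ++ P2).
Hypothesis a_under : head_under xs a a'.
Hypothesis F_ty : fv_ty F = arrows As B.
Hypothesis As_length : length As = length xs.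
Hypothesis Hs_length : length Hs = length ss.
Hypothesis Hs_nodup : NoDup Hs.
Hypothesis Hs_fresh : forall H, In H Hs -> ~ In H V /\ ~ In H (fv_pb Q).
Hypothesis Q_linear : lhs_linear Q.

Lemma imitation_closed : closed_subst th.
Proof.
  intros X v E. simpl in E. destruct fvar_eq_dec; [injection E as <- | discriminate].
  apply bounded_lams. simpl. rewrite As_length. apply bounded_Rig. split.
  - destruct a_under as [[c [-> ->]] | [j [-> [Hj ->]]]]; auto. apply bidx_lt; auto.
  - rewrite Forall_forall. intros x Hx. apply in_map_iff in Hx as [H [<- _]]. simpl.
    rewrite Forall_forall. intros y Hy. unfold eta_args in Hy.
    apply in_rev, in_seq in Hy. lia.
Qed.

Lemma imitation_app_lhs : app th (Flex F xs) = Rig a (map (fun H => Flex H xs) Hs).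
Proof.
  simpl. destruct fvar_eq_dec; [|tauto].
  rewrite inst_as_ren, <- As_length, strip_lams, As_length, ren_Rig, map_map. f_equal.
  - destruct a_under as [[c [-> ->]] | [j [-> [Hj ->]]]]; simpl; auto.
    rewrite inst_ren_bidx, nth_idx; auto.
  - apply map_ext. intros H. simpl. f_equal. apply map_inst_ren_eta_args.
Qed.

Lemma imitation_lhs_linear : lhs_linear Q'.
Proof.
  unfold lhs_linear. rewrite Forall_forall. intros e' He'.
  unfold Q' in *. apply in_app_or in He' as [He'|He'].
  - apply combine_Flex_in in He' as [H [s' [-> [HH Hs']]]]. exists H, xs. split; auto.
    destruct (Hs_fresh H HH) as [_ HQH].
    unfold occ. rewrite fv_pb_app, count_occ_app.
    fold (occ (fv_pb (combine (map (fun H => Flex H xs) Hs) ss)) H).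
    rewrite occ_combine_Flex by auto. unfold occ.
    rewrite (proj1 (NoDup_count_occ' fvar_eq_dec Hs) Hs_nodup H HH).
    rewrite !(proj1 (count_occ_not_In _ _ _)); auto;
      intros C; apply HQH, in_fv_mid; simpl; rewrite ?fv_Rig; auto.
  - destruct (lhs_linear_tail _ _ _ _ Q_linear He') as [X [xs' [E1 [HX C1]]]].
    exists X, xs'. split; auto.
    assert (C2 : occ Hs X = 0%nat).
    { apply count_occ_not_In. intros C. apply (Hs_fresh X C), in_fv_mid. auto. }
    rewrite occ_mid in C1. cbn [fst snd] in C1. rewrite fv_Rig in C1.
    apply (count_occ_In fvar_eq_dec) in HX.
    unfold occ in *. rewrite fv_pb_app, count_occ_app.
    fold (occ (fv_pb (combine (map (fun H => Flex H xs) Hs) ss)) X).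
    rewrite occ_combine_Flex by auto. unfold occ in *. unfold eqn, problem in *. lia.
Qed.

Lemma imitation_arities : arities_ok_on V Q -> arities_ok_on V Q'.
Proof.
  intros HA X k Hin HXV. unfold Q' in Hin.
  rewrite flex_occs_pb_app in Hin. apply in_app_or in Hin as [Hin|Hin].
  - apply in_flex_occs_pb in Hin as [e [He Hin]].
    apply combine_Flex_in in He as [H [s' [-> [HH Hs']]]].
    simpl in Hin. destruct Hin as [E|Hin].
    + injection E as -> _. exfalso. exact (proj1 (Hs_fresh X HH) HXV).
    + apply HA; auto. apply in_flex_occs_mid. right; left.
      cbn [snd]. rewrite flex_occs_Rig. apply in_flat_map. eauto.
  - apply HA; auto. apply in_flex_occs_mid. auto.
Qed.

Lemma imitation_shaped : arities_ok_on V Q -> shaped_on V s -> shaped_on V (scomp s th).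
Proof.
  intros HA Hsh. apply shaped_on_scomp; auto. intros X u HX E. simpl in E.
  destruct fvar_eq_dec; [|discriminate]. injection E as <-. subst X.
  eapply eta_shaped_lams; eauto. rewrite As_length.
  apply HA; auto. apply in_flex_occs_mid. left. simpl. auto.
Qed.

Lemma imitation_reduces : shaped_on V s -> reduces_goal Q s -> reduces_goal Q' (scomp s th).
Proof.
  intros Hsh HU. destruct (lhs_linear_selected _ _ _ _ _ Q_linear) as [HFr HFo].
  apply (reduces_goal_scomp Q); auto using imitation_closed.
  intros f Hf HQ'. apply Forall_app in HQ' as [Hcomb Hrest].
  assert (Hr : forall e, In e (P1 ++ P2) -> f (app th (fst e)) = f (app th (snd e))).
  { intros e He. pose proof (in_fv_pb _ _ He) as Hi.
    unfold th. rewrite !app_single_fresh by (intros C; apply HFo, Hi, in_or_app; auto).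
    rewrite Forall_forall in Hrest. auto. }
  apply Forall_app. split; [|constructor].
  - rewrite Forall_forall. intros e He. apply Hr, in_or_app. auto.
  - cbn [fst snd]. rewrite imitation_app_lhs. unfold th. rewrite app_single_fresh by auto.
    apply Hf, combine_equated; auto. rewrite length_map. auto.
  - rewrite Forall_forall. intros e He. apply Hr, in_or_app. auto.
Qed.

End Imitation.

Section FlexFlex.

Variables (P1 P2 : problem) (s : subst) (F : fvar) (xs : list nat) (G : fvar)
  (ys zs : list nat) (As : list ty) (B : ty) (Bs : list ty) (B' : ty) (H : fvar).
Let Q := P1 ++ (Flex F xs, Flex G ys) :: P2.
Let th := [(F, lams As (Flex H (map (bidx xs) zs))); (G, lams Bs (Flex H (map (bidx ys) zs)))].
Hypothesis zs_common : forall z, In z zs <-> In z xs /\ In z ys.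
Hypothesis F_ty : fv_ty F = arrows As B.
Hypothesis As_length : length As = length xs.
Hypothesis G_ty : fv_ty G = arrows Bs B'.
Hypothesis Bs_length : length Bs = length ys.
Hypothesis H_fresh : ~ In H V /\ ~ In H (fv_pb Q).
Hypothesis Q_linear : lhs_linear Q.

Lemma flexflex_images Y u : lookup th Y = Some u ->
  fv u = [H] /\ flex_occs u = [(H, length zs)].
Proof.
  simpl. intros E. rewrite <- (length_map (bidx xs)).
  destruct fvar_eq_dec; [|destruct fvar_eq_dec; [|discriminate]]; injection E as <-;
    rewrite fv_lams, flex_occs_lams; simpl; rewrite ?length_map; auto.
Qed.

Lemma flexflex_closed : closed_subst th.
Proof.
  intros Y u E. simpl in E.
  destruct fvar_eq_dec; [|destruct fvar_eq_dec; [|discriminate]]; injection E as <-;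
    apply bounded_lams; simpl; rewrite Forall_forall; intros x Hx;
    apply in_map_iff in Hx as [z [<- Hz]]; apply zs_common in Hz as [Hx Hy].
  - rewrite As_length. apply bidx_lt. auto.
  - rewrite Bs_length. apply bidx_lt. auto.
Qed.

Lemma flexflex_app_sides : app th (Flex F xs) = Flex H zs /\ app th (Flex G ys) = Flex H zs.
Proof.
  destruct (lhs_linear_selected _ _ _ _ _ Q_linear) as [HFr _].
  assert (HGF : G <> F) by (intros ->; apply HFr; simpl; auto).
  simpl. destruct (fvar_eq_dec F F); [|tauto]. destruct (fvar_eq_dec G F); [tauto|].
  destruct (fvar_eq_dec G G); [|tauto].
  split; apply inst_lams_Flex; auto; intros z Hz; apply zs_common in Hz as [Hx Hy];
    rewrite nth_idx; auto.
Qed.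

Lemma flexflex_lhs_linear : lhs_linear (app_pb th (P1 ++ P2)).
Proof.
  destruct (lhs_linear_selected _ _ _ _ _ Q_linear) as [HFr HFo].
  unfold lhs_linear. rewrite Forall_forall. intros e' He'.
  apply in_map_iff in He' as [e [<- He]].
  destruct (lhs_linear_tail _ _ _ _ Q_linear He) as [K [zs' [E1 [HK C1]]]].
  assert (HKF : K <> F) by (intros ->; auto).
  assert (HKG : K <> G).
  { intros ->. rewrite occ_mid in C1. apply (count_occ_In fvar_eq_dec) in HK.
    unfold occ in C1. simpl in C1. destruct (fvar_eq_dec G G); [|tauto].
    unfold eqn, problem in *. lia. }
  assert (HKH : K <> H) by (intros ->; apply H_fresh, in_fv_mid; auto).
  assert (HlK : lookup th K = None).
  { simpl. do 2 (destruct fvar_eq_dec; [tauto|]). auto. }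
  exists K, zs'. split.
  - unfold app_eqn. cbn [fst]. rewrite E1. simpl in HlK |- *. rewrite HlK. auto.
  - rewrite occ_app_pb; auto.
    + rewrite occ_mid in C1. unfold occ in *. simpl in C1.
      do 2 (destruct fvar_eq_dec; [congruence|]). unfold eqn, problem in *. lia.
    + intros Y u E. rewrite (proj1 (flexflex_images Y u E)). intros [C|[]]. auto.
Qed.

Lemma flexflex_arities : arities_ok_on V Q -> arities_ok_on V (app_pb th (P1 ++ P2)).
Proof.
  intros HA X k Hin HXV. apply in_flex_occs_pb in Hin as [e' [He' Hin]].
  apply in_map_iff in He' as [e [<- He]].
  assert (Hpull : forall t, In (X, k) (flex_occs (app th t)) -> In (X, k) (flex_occs t)).
  { intros t Ht. apply flex_occs_app in Ht as [Ht|[Y [u [E Ht]]]]; auto.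
    rewrite (proj2 (flexflex_images Y u E)) in Ht. destruct Ht as [Ht|[]].
    injection Ht as -> _. exfalso. exact (proj1 H_fresh HXV). }
  apply HA; auto. apply in_flex_occs_mid. right; right.
  apply in_flex_occs_pb. exists e. split; auto.
  unfold app_eqn in Hin. cbn [fst snd] in Hin. rewrite in_app_iff in *.
  destruct Hin; [left|right]; apply Hpull; auto.
Qed.

Lemma flexflex_shaped : arities_ok_on V Q -> shaped_on V s -> shaped_on V (scomp s th).
Proof.
  intros HA Hsh. apply shaped_on_scomp; auto. intros X u HX E. simpl in E.
  destruct fvar_eq_dec; [|destruct fvar_eq_dec; [|discriminate]];
    injection E as <-; subst X; eapply eta_shaped_lams; eauto;
    [rewrite As_length | rewrite Bs_length]; apply HA; auto;
    apply in_flex_occs_mid; [left | right; left]; simpl; auto.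
Qed.

Lemma flexflex_reduces : shaped_on V s -> reduces_goal Q s ->
  reduces_goal (app_pb th (P1 ++ P2)) (scomp s th).
Proof.
  intros Hsh HU. destruct flexflex_app_sides as [E1 E2].
  apply (reduces_goal_scomp Q); auto using flexflex_closed.
  intros f Hf HQ'.
  assert (Hr : forall e, In e (P1 ++ P2) -> f (app th (fst e)) = f (app th (snd e))).
  { intros e He. rewrite Forall_forall in HQ'. apply (HQ' (app_eqn th e)), in_map. auto. }
  apply Forall_app. split; [|constructor].
  - rewrite Forall_forall. intros e He. apply Hr, in_or_app. auto.
  - cbn [fst snd]. rewrite E1, E2. auto.
  - rewrite Forall_forall. intros e He. apply Hr, in_or_app. auto.
Qed.

End FlexFlex.

Lemma ve_step_invariant st st' : ve_step avoid st st' -> ve_invariant st -> ve_invariant st'.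
Proof.
  intros [P1 P2 s F xs a a' ss As B Cs D Hs Ha HF HL _ HHs HND Hfr _
         | P1 P2 s F xs G ys zs As B Bs B' H _ Hz HF HL HG HLG Hfr _]
         [HLIN [HA [HSH HU]]]; cbn [fst snd] in *.
  - assert (Hunder : head_under xs a a') by firstorder.
    assert (Hfr' : forall H, In H Hs ->
      ~ In H V /\ ~ In H (fv_pb (P1 ++ (Flex F xs, Rig a ss) :: P2)))
      by (intros H HH; apply (fresh_for_ve_state H _ s), Hfr, HH).
    split; [|split; [|split]]; cbn [fst snd].
    + eapply imitation_lhs_linear; eauto.
    + eapply imitation_arities; eauto.
    + eapply imitation_shaped; eauto.
    + eapply imitation_reduces; eauto.
  - apply fresh_for_ve_state in Hfr.
    split; [|split; [|split]]; cbn [fst snd].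
    + eapply flexflex_lhs_linear; eauto.
    + eapply flexflex_arities; eauto.
    + eapply flexflex_shaped; eauto.
    + eapply flexflex_reduces; eauto.
Qed.

Lemma var_elim_sound phi : ~ In F0 (fv u0) -> var_elim avoid (Flex F0 xs0) u0 phi ->
  app phi (Flex F0 xs0) = app phi u0 /\ shaped_on V phi.
Proof.
  intros HF0 Hve. apply clos_rt_rt1n_iff in Hve.
  assert (Hinit : ve_invariant ([(Flex F0 xs0, u0)], eps)).
  { split; [|split; [|split]]; cbn [fst snd].
    - repeat constructor. exists F0, xs0. split; auto. unfold occ, fv_pb. simpl.
      destruct fvar_eq_dec; [|tauto].
      rewrite app_nil_r, (proj1 (count_occ_not_In _ _ _) HF0). auto.
    - intros X k Hin _. simpl in Hin. rewrite app_nil_r in Hin. destruct Hin as [E|Hin].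
      + injection E as <- <-. auto.
      + unfold arities_ok in u0_arities. rewrite Forall_forall in u0_arities.
        exact (u0_arities _ Hin).
    - discriminate.
    - intros f Hf HQ. rewrite !app_nil. inversion HQ. auto. }
  remember ([(Flex F0 xs0, u0)], eps) as st0 eqn:E0. clear E0.
  remember (([], phi) : ve_state) as st1 eqn:E1. revert E1 Hinit.
  induction Hve as [st|st st' st'' Hs _ IH]; intros -> Hinv.
  - destruct Hinv as [_ [_ [Hsh HU]]]. cbn [fst snd] in *. split; auto.
    apply (HU (fun t => t)); auto. intros h l1 l2 E. rewrite !map_id in E. congruence.
  - apply IH; auto. eapply ve_step_invariant; eauto.
Qed.

End VarElimSound.

(** * One HOPSU step *)

Lemma degree_unified_eqn sim th tau P1 t u P2 :
  (forall f, sim f f = 1) -> wt_pb (P1 ++ (t, u) :: P2) -> wt_subst tau ->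
  shaped_on (fv_pb (P1 ++ (t, u) :: P2)) th -> app th t = app th u ->
  degree sim (scomp th tau) (P1 ++ (t, u) :: P2) = degree sim tau (app_pb th (P1 ++ P2)).
Proof.
  intros Hrefl HP Htau Hsh Heq.
  rewrite (degree_app_pb _ _ tau th).
  - unfold app_pb. rewrite map_app. simpl. rewrite degree_mid. simpl.
    rewrite Heq, Rtm_refl, Rmin_right, <- map_app by auto using degree_le1. reflexivity.
  - intros e He. destruct (wt_pb_arities_ok _ _ HP He) as [H1 H2].
    pose proof (in_fv_pb _ _ He) as Hi.
    split; apply app_scomp; auto using wt_subst_closed;
      eapply arities_match_of_shaped; eauto; intros X HX; apply Hi, in_or_app; auto.
Qed.

Lemma unifier_of_unified_eqn sim mu th tau P1 t u P2 d'' :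
  (forall f, sim f f = 1) -> mu <= 1 -> wt_pb (P1 ++ (t, u) :: P2) -> wt_subst tau ->
  shaped_on (fv_pb (P1 ++ (t, u) :: P2)) th -> app th t = app th u ->
  unifier sim mu tau (app_pb th (P1 ++ P2)) d'' ->
  unifier sim mu (scomp th tau) (P1 ++ (t, u) :: P2) (Rmin 1 d'').
Proof.
  intros Hrefl Hmu HP Htau Hsh Heq.
  apply unifier_of_degree_eq; auto. apply degree_unified_eqn; auto.
Qed.

Lemma SV_unifies P1 P2 F xs ys zs As B H :
  wt_pb (P1 ++ (Flex F xs, Flex F ys) :: P2) ->
  length xs = length ys ->
  (forall z, In z zs <-> exists i, i < length xs /\ nth i xs 0 = z /\ nth i ys 0 = z)%nat ->
  fv_ty F = arrows As B -> length As = length xs ->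
  let th := [(F, lams As (Flex H (map (bidx xs) zs)))] in
  shaped_on (fv_pb (P1 ++ (Flex F xs, Flex F ys) :: P2)) th /\
  app th (Flex F xs) = app th (Flex F ys).
Proof.
  intros HP L Hzs HF HL th.
  assert (Hin : In (Flex F xs, Flex F ys) (P1 ++ (Flex F xs, Flex F ys) :: P2))
    by (apply in_or_app; right; left; auto).
  unfold wt_pb in HP. rewrite Forall_forall in HP.
  destruct (HP _ Hin) as [G [T [Hw _]]]. apply wt_Flex_inv in Hw as [Hnd Har].
  split.
  - intros X u _ E. unfold th in E. simpl in E. destruct fvar_eq_dec; [|discriminate].
    injection E as <-. subst. rewrite <- HL in Har. eapply eta_shaped_lams; eauto.
  - unfold th. simpl. destruct fvar_eq_dec; [|tauto].
    rewrite !inst_lams_Flex; auto.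
    all: intros z Hz; apply Hzs in Hz as [i [Hi [<- E2]]].
    all: split; [apply nth_In; auto | rewrite idx_nth; auto].
Qed.

Lemma lookup_restrict s V X :
  lookup (restrict s V) X = if in_dec fvar_eq_dec X V then lookup s X else None.
Proof.
  induction s as [|[Y v] s IH]; simpl; [destruct in_dec; auto|].
  destruct (in_dec fvar_eq_dec Y V) eqn:EY; simpl.
  - destruct fvar_eq_dec; subst; auto. rewrite EY. auto.
  - destruct fvar_eq_dec; subst; auto. rewrite IH, EY. auto.
Qed.

Lemma LF_unifies P1 P2 sigma F xs u phi :
  wt_pb (P1 ++ (Flex F xs, u) :: P2) -> ~ In F (fv u) ->
  var_elim (fv_pb (P1 ++ (Flex F xs, u) :: P2) ++ subst_vars sigma) (Flex F xs) u phi ->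
  let th := restrict phi (F :: fv u) in
  shaped_on (fv_pb (P1 ++ (Flex F xs, u) :: P2)) th /\ app th (Flex F xs) = app th u.
Proof.
  intros HP HFu Hve th.
  assert (Hin : In (Flex F xs, u) (P1 ++ (Flex F xs, u) :: P2))
    by (apply in_or_app; right; left; auto).
  destruct (wt_pb_arities_ok _ _ HP Hin) as [HaF Hau].
  assert (Hav : incl (F :: fv u) (fv_pb (P1 ++ (Flex F xs, u) :: P2) ++ subst_vars sigma)).
  { intros X HX. apply in_or_app. left. apply (in_fv_pb _ _ Hin). simpl in *. tauto. }
  inversion HaF as [|? ? HF0 _]; subst.
  destruct (var_elim_sound _ F xs u Hav HF0 Hau phi HFu Hve) as [Heq Hsh].
  assert (Hth : forall X, In X (F :: fv u) -> lookup th X = lookup phi X).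
  { intros X HX. unfold th. rewrite lookup_restrict. destruct in_dec; tauto. }
  split.
  - intros X v _ E. unfold th in E. rewrite lookup_restrict in E.
    destruct in_dec; [eapply Hsh; eauto | discriminate].
  - rewrite (app_ext th phi), (app_ext th phi u); auto.
    + intros X HX. apply Hth. right. auto.
    + intros X [<-|[]]. apply Hth. left. auto.
Qed.

Theorem lemma1 (sim : cst -> cst -> R) (mu : R)
  (P : problem) (sigma : subst) (d : R)
  (P' : problem) (theta : subst) (d' : R)
  (tau : subst) (d'' : R) :
  similarity sim ->
  0 < mu <= 1 ->
  mu <= d <= 1 ->
  wt_pb P -> wt_subst sigma -> wt_subst tau ->
  (* one HOPSU step  P; sigma; d  ~>  P'; sigma theta; d /\ d' *)
  hopsu_step sim mu P sigma d P' theta d' ->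
  unifier sim mu tau P' d'' ->
  unifier sim mu (scomp theta tau) P (Rmin d' d'').
Proof.
  intros [_ [Hrefl [Hsym _]]] [_ Hmu1] _ HP _ Htau Hstep.
  revert HP. destruct Hstep as
    [P1 P2 s d A t u
    | P1 P2 s d h g ts ss Hlen Hdec
    | P1 P2 s d F xs ys zs As B H Hlen _ Hzs HF HAs _ _
    | P1 P2 s d a ss F xs _
    | P1 P2 s d F xs u phi _ HFu Hve];
    intros HP Hun.
  - exact (unifier_of_degree_eq _ _ eps _ _ _ _ (degree_Abs _ _ _ _ _ _ _) Hmu1 Hun).
  - refine (unifier_of_degree _ _ eps _ _ _ _ _ (degree_Dec _ _ _ _ _ _ _ _ Hlen) _ Hun).
    eapply Rle_trans; [exact Hdec | apply Rmin_r].
  - destruct (SV_unifies _ _ _ _ _ _ _ B H HP Hlen Hzs HF HAs) as [Hsh Heq].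
    eapply unifier_of_unified_eqn; eauto.
  - exact (unifier_of_degree_eq _ _ eps _ _ _ _ (degree_Ori _ _ _ _ _ _ Hsym) Hmu1 Hun).
  - destruct (LF_unifies _ _ _ _ _ _ _ HP HFu Hve) as [Hsh Heq].
    eapply unifier_of_unified_eqn; eauto.
Qed.
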